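(* Let $(X,Y,Z)$ and $(X',Y',Z')$ be triples of random variables on finite alphabets such that $(X,Y,Z)$ is independent of $(X',Y',Z')$. Then $$\operatorname{Un}((X,X')\to(Z,Z')\mid(Y,Y'))=\operatorname{Un}(X\to Z\mid Y)+\operatorname{Un}(X'\to Z'\mid Y'),$$ where $\operatorname{Un}$ is the unique information defined below.
   Context: For random variables $U,V,W$ on finite alphabets $\mathcal{U},\mathcal{V},\mathcal{W}$ and each $v\in\mathcal{V}$ with $\Pr(V=v)>0$, let $(A_v,B_v,C_v)$ be the random triple on $\mathcal{U}\times\mathcal{V}\times\mathcal{W}$ with $\Pr(A_v=u,B_v=v',C_v=w)=0$ if $\Pr(W=w)=0$ and $\Pr(A_v=u,B_v=v',C_v=w)=\Pr(U=u,V=v',W=w)\Pr(W=w\mid V=v)/\Pr(W=w)$ otherwise. The unique information is $\operatorname{Un}(U\to W\mid V)=\sum_{v:\Pr(V=v)>0}\Pr(V=v)\,I(A_v;C_v)$, where $I$ is mutual information. Pairs such as $(X,X')$ are regarded as single random variables on product alphabets. *)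

From mathcomp Require Import all_boot all_order all_algebra.
From mathcomp Require Import reals exp.
Set Implicit Arguments. Unset Strict Implicit. Unset Printing Implicit Defensive.
Import Order.TTheory GRing.Theory Num.Theory.
Local Open Scope ring_scope.

Section Info.
Variable R : realType.

Definition is_pmf (Om : finType) (P : Om -> R) : Prop :=
  (forall o, 0 <= P o) /\ \sum_(o : Om) P o = 1.

Definition mutinf (TA TC : finType) (r : TA -> TC -> R) : R :=
  \sum_(a : TA) \sum_(c : TC)
     (if r a c == 0 then 0
      else r a c * ln (r a c / ((\sum_(c' : TC) r a c') * (\sum_(a' : TA) r a' c)))).

Variables (Om : finType) (P : Om -> R).
Variables (TU TV TW : finType) (U : Om -> TU) (V : Om -> TV) (W : Om -> TW).

Definition pUVW (u : TU) (v : TV) (w : TW) : R :=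
  \sum_(o | (U o == u) && (V o == v) && (W o == w)) P o.
Definition pV (v : TV) : R := \sum_(o | V o == v) P o.
Definition pW (w : TW) : R := \sum_(o | W o == w) P o.
Definition pVW (v : TV) (w : TW) : R := \sum_(o | (V o == v) && (W o == w)) P o.

(* joint pmf of the triple (A_v, B_v, C_v) *)
Definition tri_pmf (v : TV) (u : TU) (v' : TV) (w : TW) : R :=
  if pW w == 0 then 0
  else pUVW u v' w * (pVW v w / pV v) / pW w.

Definition UnInfo : R :=
  \sum_(v : TV | 0 < pV v) pV v * mutinf (fun u w => \sum_(v' : TV) tri_pmf v u v' w).

End Info.

From mathcomp Require Import all_boot all_order all_algebra.
From mathcomp Require Import reals exp.
From mathcomp Require Import ring.
Set Implicit Arguments. Unset Strict Implicit. Unset Printing Implicit Defensive.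
Import Order.TTheory GRing.Theory Num.Theory.
Local Open Scope ring_scope.

(* Independence makes every marginal of ((X,X'),(Y,Y'),(Z,Z')) the product of
   the corresponding marginals of (X,Y,Z) and (X',Y',Z'); hence the pmf of
   (A_(y,y'), C_(y,y')) is the product of those of (A_y, C_y) and
   (A'_y', C'_y').  Mutual information is additive on such product pmfs, since
   the logarithm of a product is a sum, and the weights Pr(Y=y, Y'=y') factor
   as well, so the sum defining Un splits into the two sums. *)

Section MutualInformation.
Variable R : realType.

Lemma ler_sumr_term (I : finType) (F : I -> R) i :
  (forall j, 0 <= F j) -> F i <= \sum_j F j.
Proof. by move=> F_ge0; rewrite (bigD1 i) //= lerDl sumr_ge0. Qed.

Lemma sumr_pairM (I J : finType) (F : I -> R) (G : J -> R) :
  \sum_(p : I * J) F p.1 * G p.2 = (\sum_i F i) * (\sum_j G j).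
Proof. by rewrite big_distrlr pair_bigA. Qed.

Lemma sum_prod_pmfD (I J : finType) (A : pred I) (B : pred J)
    (p : I -> R) (q : J -> R) (f : I -> R) (g : J -> R) :
  \sum_(i | A i) p i = 1 -> \sum_(j | B j) q j = 1 ->
  \sum_(k | A k.1 && B k.2) p k.1 * q k.2 * (f k.1 + g k.2) =
  \sum_(i | A i) p i * f i + \sum_(j | B j) q j * g j.
Proof.
move=> p_sum1 q_sum1.
rewrite -(pair_big A B (fun i j => p i * q j * (f i + g j))) /=.
rewrite -[X in _ + X]mul1r -p_sum1 mulr_suml -big_split; apply: eq_bigr => i _ /=.
rewrite -[p i * f i]mulr1 -q_sum1 !mulr_sumr -big_split; apply: eq_bigr => j _ /=.
ring.
Qed.

Definition kl_term (p q : R) : R := if p == 0 then 0 else p * ln (p / q).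

Lemma kl_termM (p1 p2 q1 q2 : R) :
  0 <= p1 -> 0 <= p2 -> (0 < p1 -> 0 < q1) -> (0 < p2 -> 0 < q2) ->
  kl_term (p1 * p2) (q1 * q2) = kl_term p1 q1 * p2 + p1 * kl_term p2 q2.
Proof.
rewrite /kl_term mulf_eq0 => p1_ge0 p2_ge0 q1_gt0 q2_gt0.
have [->|p1_neq0] := eqVneq p1 0; first by rewrite !mul0r addr0.
have [->|p2_neq0] := eqVneq p2 0; first by rewrite !mulr0 add0r.
have p1_gt0 : 0 < p1 by rewrite lt_def p1_neq0.
have p2_gt0 : 0 < p2 by rewrite lt_def p2_neq0.
have -> : p1 * p2 / (q1 * q2) = p1 / q1 * (p2 / q2) by rewrite invfM mulrACA.
by rewrite /= lnM ?posrE ?divr_gt0 ?q1_gt0 ?q2_gt0 //; ring.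
Qed.

Lemma mutinfE (TA TC : finType) (r : TA -> TC -> R) :
  mutinf r = \sum_a \sum_c kl_term (r a c) ((\sum_c' r a c') * \sum_a' r a' c).
Proof. by []. Qed.

Lemma eq_mutinf (TA TC : finType) (r r' : TA -> TC -> R) :
  r =2 r' -> mutinf r = mutinf r'.
Proof.
move=> eq_r; rewrite !mutinfE; apply: eq_bigr => a _; apply: eq_bigr => c _.
by rewrite eq_r; congr (kl_term _ (_ * _)); apply: eq_bigr => *; rewrite eq_r.
Qed.

Lemma marginalsM_gt0 (TA TC : finType) (r : TA -> TC -> R) a c :
  (forall a c, 0 <= r a c) -> 0 < r a c ->
  0 < (\sum_c' r a c') * \sum_a' r a' c.
Proof.
move=> r_ge0 r_gt0; rewrite mulr_gt0 // (lt_le_trans r_gt0) //.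
- exact: ler_sumr_term (r_ge0 a).
- exact: ler_sumr_term (r_ge0^~ c).
Qed.

Lemma mutinf_pairM (TA TC TA' TC' : finType)
    (r1 : TA -> TC -> R) (r2 : TA' -> TC' -> R) :
  (forall a c, 0 <= r1 a c) -> (forall a c, 0 <= r2 a c) ->
  mutinf (fun a c => r1 a.1 c.1 * r2 a.2 c.2) =
  mutinf r1 * (\sum_a \sum_c r2 a c) + (\sum_a \sum_c r1 a c) * mutinf r2.
Proof.
move=> r1_ge0 r2_ge0.
have sum2_pairM (f : TA -> TC -> R) (g : TA' -> TC' -> R) :
    \sum_(a : TA * TA') \sum_(c : TC * TC') f a.1 c.1 * g a.2 c.2 =
    (\sum_a \sum_c f a c) * (\sum_a \sum_c g a c).
  by rewrite -sumr_pairM; apply: eq_bigr => a _; rewrite -sumr_pairM.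
rewrite !mutinfE -!sum2_pairM -big_split; apply: eq_bigr => a _.
rewrite -big_split; apply: eq_bigr => c _ /=.
rewrite sumr_pairM (sumr_pairM (r1^~ c.1) (r2^~ c.2)) mulrACA kl_termM //.
- exact: marginalsM_gt0.
- exact: marginalsM_gt0.
Qed.

End MutualInformation.

Section UniqueInformation.
Variables (R : realType) (Om : finType) (P : Om -> R).
Hypothesis P_ge0 : forall o, 0 <= P o.

Section Marginals.
Variables (TU TV TW : finType) (U : Om -> TU) (V : Om -> TV) (W : Om -> TW).

Definition pAC (v : TV) (u : TU) (w : TW) : R := \sum_v' tri_pmf P U V W v u v' w.

Lemma UnInfoE :
  UnInfo P U V W = \sum_(v | 0 < pV P V v) pV P V v * mutinf (pAC v).
Proof. by []. Qed.

Lemma pAC_ge0 v u w : 0 <= pAC v u w.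
Proof.
apply: sumr_ge0 => v' _; rewrite /tri_pmf; case: eqP => // _.
by rewrite !(mulr_ge0, divr_ge0, invr_ge0) ?sumr_ge0.
Qed.

Lemma sum_pUVW_UV w : \sum_u \sum_v' pUVW P U V W u v' w = pW P W w.
Proof.
rewrite /pW (partition_big U xpredT) //; apply: eq_bigr => u _.
rewrite (partition_big V xpredT) //; apply: eq_bigr => v' _; apply: eq_bigl => o.
by rewrite andbC andbA.
Qed.

Lemma sum_pVW_V w : \sum_v pVW P V W v w = pW P W w.
Proof.
rewrite /pW (partition_big V xpredT) //; apply: eq_bigr => v _; apply: eq_bigl => o.
by rewrite andbC.
Qed.

Lemma sum_pVW_W v : \sum_w pVW P V W v w = pV P V v.
Proof.
by rewrite /pV (partition_big W xpredT) //; apply: eq_bigr => w _.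
Qed.

Lemma sum_pAC v : 0 < pV P V v -> \sum_u \sum_w pAC v u w = 1.
Proof.
move=> pVv_gt0; rewrite exchange_big /=.
rewrite -(divff (lt0r_neq0 pVv_gt0)) -{1}sum_pVW_W mulr_suml; apply: eq_bigr => w _.
rewrite /pAC /tri_pmf; have [pWw_eq0|pWw_neq0] := eqVneq (pW P W w) 0.
  have pVW_eq0 : pVW P V W v w = 0.
    have /psumr_eq0P -> // : \sum_v' pVW P V W v' w = 0 by rewrite sum_pVW_V.
    by move=> v' _; apply: sumr_ge0.
  by rewrite pVW_eq0 mul0r big1 // => u _; rewrite big1.
under eq_bigr do rewrite -!mulr_suml.
by rewrite -!mulr_suml sum_pUVW_UV mulrAC divff ?mul1r.
Qed.

Lemma sum_pV_gt0 : \sum_o P o = 1 -> \sum_(v | 0 < pV P V v) pV P V v = 1.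
Proof.
move=> P_sum1; rewrite -P_sum1 (partition_big V xpredT) //=.
rewrite [RHS](bigID (fun v => 0 < pV P V v)) /= [X in _ = _ + X]big1 ?addr0 //.
by move=> v; rewrite lt0r negb_and negbK sumr_ge0 ?orbF // => /eqP.
Qed.

End Marginals.

Lemma sum_fibers (T : finType) (f : Om -> T) (C : pred T) :
  \sum_(o | C (f o)) P o = \sum_(t | C t) \sum_(o | f o == t) P o.
Proof.
rewrite (partition_big f C) //; apply: eq_bigr => t Ct; apply: eq_bigl => o.
by case: eqP => [->|]; rewrite ?Ct ?andbF.
Qed.

Lemma indep_events (TS TS' : finType) (S : Om -> TS) (S' : Om -> TS') :
  (forall s s', \sum_(o | (S o == s) && (S' o == s')) P o =
                (\sum_(o | S o == s) P o) * (\sum_(o | S' o == s') P o)) ->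
  forall (A : pred TS) (B : pred TS'),
  \sum_(o | A (S o) && B (S' o)) P o =
  (\sum_(o | A (S o)) P o) * (\sum_(o | B (S' o)) P o).
Proof.
move=> indep A B; rewrite !sum_fibers big_distrlr pair_big /=.
rewrite (sum_fibers (fun o => (S o, S' o)) (fun t => A t.1 && B t.2)).
apply: eq_bigr => -[s s'] _; rewrite -indep; apply: eq_bigl => o.
by rewrite xpair_eqE.
Qed.

Section Independence.
Variables (TX TY TZ TX' TY' TZ' : finType)
  (X : Om -> TX) (Y : Om -> TY) (Z : Om -> TZ)
  (X' : Om -> TX') (Y' : Om -> TY') (Z' : Om -> TZ').
Hypothesis indep : forall x y z x' y' z',
  \sum_(o | [&& X o == x, Y o == y, Z o == z, X' o == x', Y' o == y' & Z' o == z']) P o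
  = (\sum_(o | [&& X o == x, Y o == y & Z o == z]) P o)
    * (\sum_(o | [&& X' o == x', Y' o == y' & Z' o == z']) P o).

Let XX o := (X o, X' o).
Let YY o := (Y o, Y' o).
Let ZZ o := (Z o, Z' o).

Lemma indep_triples (A : pred (TX * TY * TZ)) (B : pred (TX' * TY' * TZ')) :
  \sum_(o | A (X o, Y o, Z o) && B (X' o, Y' o, Z' o)) P o =
  (\sum_(o | A (X o, Y o, Z o)) P o) * (\sum_(o | B (X' o, Y' o, Z' o)) P o).
Proof.
apply: indep_events => -[[x y] z] [[x' y'] z'].
transitivity (\sum_(o | [&& X o == x, Y o == y, Z o == z, X' o == x', Y' o == y' & Z' o == z']) P o).
  by apply: eq_bigl => o; rewrite !xpair_eqE -!andbA.
by rewrite indep; congr (_ * _); apply: eq_bigl => o; rewrite !xpair_eqE -!andbA.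
Qed.

Lemma pUVW_pair x x' y y' z z' :
  pUVW P XX YY ZZ (x, x') (y, y') (z, z') =
  pUVW P X Y Z x y z * pUVW P X' Y' Z' x' y' z'.
Proof.
rewrite /pUVW -(indep_triples (fun t => (t.1.1 == x) && (t.1.2 == y) && (t.2 == z))
                             (fun t => (t.1.1 == x') && (t.1.2 == y') && (t.2 == z'))).
by apply: eq_bigl => o; rewrite /= !xpair_eqE; do !case: eqP.
Qed.

Lemma pV_pair y y' : pV P YY (y, y') = pV P Y y * pV P Y' y'.
Proof.
rewrite /pV -(indep_triples (fun t => t.1.2 == y) (fun t => t.1.2 == y')).
by apply: eq_bigl => o; rewrite /= !xpair_eqE.
Qed.

Lemma pW_pair z z' : pW P ZZ (z, z') = pW P Z z * pW P Z' z'.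
Proof.
rewrite /pW -(indep_triples (fun t => t.2 == z) (fun t => t.2 == z')).
by apply: eq_bigl => o; rewrite /= !xpair_eqE.
Qed.

Lemma pVW_pair y y' z z' :
  pVW P YY ZZ (y, y') (z, z') = pVW P Y Z y z * pVW P Y' Z' y' z'.
Proof.
rewrite /pVW -(indep_triples (fun t => (t.1.2 == y) && (t.2 == z))
                             (fun t => (t.1.2 == y') && (t.2 == z'))).
by apply: eq_bigl => o; rewrite /= !xpair_eqE; do !case: eqP.
Qed.

Lemma tri_pmf_pair y y' x x' y1 y1' z z' :
  tri_pmf P XX YY ZZ (y, y') (x, x') (y1, y1') (z, z') =
  tri_pmf P X Y Z y x y1 z * tri_pmf P X' Y' Z' y' x' y1' z'.
Proof.
rewrite /tri_pmf pUVW_pair pV_pair pW_pair pVW_pair mulf_eq0.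
have [->|pWz_neq0] := eqVneq (pW P Z z) 0; first by rewrite /= mul0r.
have [->|pWz'_neq0] := eqVneq (pW P Z' z') 0; first by rewrite orbT mulr0.
by rewrite /= !invfM; ring.
Qed.

Lemma pAC_pair y y' x x' z z' :
  pAC XX YY ZZ (y, y') (x, x') (z, z') =
  pAC X Y Z y x z * pAC X' Y' Z' y' x' z'.
Proof.
rewrite /pAC -sumr_pairM; apply: eq_bigr => -[y1 y1'] _; exact: tri_pmf_pair.
Qed.

Lemma mutinf_pAC_pair y y' :
  0 < pV P Y y -> 0 < pV P Y' y' ->
  mutinf (pAC XX YY ZZ (y, y')) = mutinf (pAC X Y Z y) + mutinf (pAC X' Y' Z' y').
Proof.
move=> pVy_gt0 pVy'_gt0.
rewrite (eq_mutinf (r' := fun a c => pAC X Y Z y a.1 c.1 * pAC X' Y' Z' y' a.2 c.2)).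
  by rewrite mutinf_pairM ?sum_pAC ?mulr1 ?mul1r //; exact: pAC_ge0.
by move=> [x x'] [z z']; exact: pAC_pair.
Qed.

Lemma UnInfo_pair : \sum_o P o = 1 ->
  UnInfo P XX YY ZZ = UnInfo P X Y Z + UnInfo P X' Y' Z'.
Proof.
move=> P_sum1; rewrite !UnInfoE -sum_prod_pmfD ?sum_pV_gt0 //.
apply: eq_big => -[y y'] /=; first by rewrite pV_pair mulr_ge0_gt0 ?sumr_ge0.
by rewrite pV_pair mulr_ge0_gt0 ?sumr_ge0 // => /andP[? ?]; rewrite mutinf_pAC_pair.
Qed.

End Independence.
End UniqueInformation.

Theorem lemma8 (R : realType) (Om : finType) (P : Om -> R)
  (TX TY TZ TX' TY' TZ' : finType)
  (X : Om -> TX) (Y : Om -> TY) (Z : Om -> TZ)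
  (X' : Om -> TX') (Y' : Om -> TY') (Z' : Om -> TZ') :
  is_pmf P ->
  (forall x y z x' y' z',
     \sum_(o | [&& X o == x, Y o == y, Z o == z, X' o == x', Y' o == y' & Z' o == z']) P o
     = (\sum_(o | [&& X o == x, Y o == y & Z o == z]) P o)
       * (\sum_(o | [&& X' o == x', Y' o == y' & Z' o == z']) P o)) ->
  UnInfo P (fun o => (X o, X' o)) (fun o => (Y o, Y' o)) (fun o => (Z o, Z' o))
  = UnInfo P X Y Z + UnInfo P X' Y' Z'.
Proof. by move=> [P_ge0 P_sum1] indep; exact: (UnInfo_pair P_ge0 indep P_sum1). Qed.
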